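(* Consider the inner-loop system $x_2(k+1)=A_2x_2(k)+B_2u(k)$ with $x_2\in\mathbb{R}^{n_2}$, together with an inner-loop predictive controller operating as follows. At each time $k$ the inner loop receives a predicted reference-model trajectory $\mathbf{x_f}(k)=[\mathbf{x_f}(k|k),\dots,\mathbf{x_f}(k+N|k)]$ and chooses an input trajectory $\mathbf{u}(k)=[\mathbf{u}(k|k),\dots,\mathbf{u}(k+N-1|k)]$; the predicted states are $\mathbf{x_2}(k|k)=x_2(k)$, $\mathbf{x_2}(k+i+1|k)=A_2\mathbf{x_2}(k+i|k)+B_2\mathbf{u}(k+i|k)$, and $\mathbf{\tilde x}(k+i|k)=\mathbf{x_2}(k+i|k)-\mathbf{x_f}(k+i|k)$; the input applied at time $k$ is $u(k)=\mathbf{u}(k|k)$. Let $G_2=\{\tilde x\in\mathbb{R}^{n_2}:\tilde x^TP\tilde x\le V_2^*\}$ with $P$ symmetric positive definite and $V_2^*>0$, and let $\lambda_2\in[0,1)$. Suppose that, given $\mathbf{x_f}(k)$, a trajectory $\mathbf{u}(k)$ is computed that yields $\mathbf{\tilde x}(k+N|k)\in\lambda_2G_2$. Then there exists $\epsilon_{x_f}^{max}>0$ such that if $\|\mathbf{x_f}(k+N|k+1)-\mathbf{x_f}(k+N|k)\|\le\epsilon_{x_f}^{max}$ and $\mathbf{u}(k+i|k+1)=\mathbf{u}(k+i|k)$ for $i=1,\dots,N-1$, then $\mathbf{\tilde x}(k+N|k+1)\in G_2$.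
   Context: $\lambda_2G_2=\{\lambda_2x:x\in G_2\}$. The notation $(i|k)$ denotes the value of a variable at step $i$ predicted/chosen by the optimization carried out at time $k$; $N\ge 2$ is the prediction horizon. *)

From HB Require Import structures.
From mathcomp Require Import all_boot all_order all_algebra.
From mathcomp Require Import reals.
Set Implicit Arguments. Unset Strict Implicit. Unset Printing Implicit Defensive.
Import Order.TTheory GRing.Theory Num.Theory.
Local Open Scope ring_scope.

Definition vnorm (R : realType) (n : nat) (x : 'cV[R]_n) : R :=
  Num.sqrt (\sum_(i < n) x i 0 ^+ 2).

Definition qform (R : realType) (n : nat) (P : 'M[R]_n) (x : 'cV[R]_n) : R :=
  (x^T *m P *m x) 0 0.

Definition spd (R : realType) (n : nat) (P : 'M[R]_n) : Prop :=
  P^T = P /\ forall x : 'cV[R]_n, x != 0 -> 0 < qform P x.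

Definition inG (R : realType) (n : nat) (P : 'M[R]_n) (V : R) (x : 'cV[R]_n) : Prop :=
  qform P x <= V.

Definition in_scaledG (R : realType) (n : nat) (lam : R) (P : 'M[R]_n) (V : R)
  (x : 'cV[R]_n) : Prop :=
  exists y, inG P V y /\ x = lam *: y.

(* Predicted state: pred_state A B x0 u i = x2(k+i|k) when x2(k|k) = x0 and
   u j = u(k+j|k). *)
Fixpoint pred_state (R : realType) (n m : nat) (A : 'M[R]_n) (B : 'M[R]_(n, m))
  (x0 : 'cV[R]_n) (u : nat -> 'cV[R]_m) (i : nat) : 'cV[R]_n :=
  match i with
  | 0 => x0
  | i'.+1 => A *m pred_state A B x0 u i' + B *m u i'
  end.

From HB Require Import structures.
From mathcomp Require Import all_boot all_order all_algebra.
From mathcomp Require Import reals.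
From mathcomp Require Import ring lra.
Import Order.TTheory GRing.Theory Num.Theory.
Local Open Scope ring_scope.

(* The shifted plan reaches time k+N as the state x~(k+N|k+1) = x~(k+N|k) - w, where
   w = x_f(k+N|k+1) - x_f(k+N|k).  Since x -> x^T P x is locally Lipschitz, and
   x~(k+N|k) lies in lambda_2 G_2, i.e. has quadratic form at most lambda_2^2 V_2^*,
   a perturbation w small enough to cost less than (1 - lambda_2^2) V_2^* keeps the
   state in G_2. *)

Set Implicit Arguments.
Unset Strict Implicit.
Unset Printing Implicit Defensive.

Section Prediction.
Variables (R : realType) (n m : nat) (A : 'M[R]_n) (B : 'M[R]_(n, m)).

Lemma pred_state_shift (x0 : 'cV[R]_n) (u u' : nat -> 'cV[R]_m) k :
  (forall j, (j < k)%N -> u' j = u j.+1) ->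
  pred_state A B (A *m x0 + B *m u 0%N) u' k = pred_state A B x0 u k.+1.
Proof.
elim: k => [//|k IHk] eq_u /=.
rewrite IHk => [|j lt_jk]; last exact/eq_u/ltnW.
by rewrite eq_u.
Qed.

End Prediction.

Section QuadraticForm.
Variables (R : realType) (n : nat).
Implicit Types (P : 'M[R]_n) (x y z w : 'cV[R]_n).

Definition mx_abs_sum P : R := \sum_i \sum_j `|P i j|.

Lemma mx_abs_sum_ge0 P : 0 <= mx_abs_sum P.
Proof. by apply: sumr_ge0 => i _; apply: sumr_ge0. Qed.

Lemma vnorm_ge0 x : 0 <= vnorm x.
Proof. exact: sqrtr_ge0. Qed.

Lemma normr_coef_le_vnorm x i : `|x i 0| <= vnorm x.
Proof.
have sqr_sum_ge0 (J : pred 'I_n) : 0 <= \sum_(j | J j) x j 0 ^+ 2.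
  by apply: sumr_ge0 => j _; apply: sqr_ge0.
by rewrite /vnorm -sqrtr_sqr ler_sqrt // (bigD1 i) //= lerDl.
Qed.

Lemma bilinear_le x P z :
  `|(x^T *m P *m z) 0 0| <= mx_abs_sum P * (vnorm x * vnorm z).
Proof.
have -> : (x^T *m P *m z) 0 0 = \sum_i \sum_j x i 0 * P i j * z j 0.
  rewrite mxE exchange_big; apply: eq_bigr => j _.
  by rewrite mxE mulr_suml; apply: eq_bigr => i _; rewrite mxE.
rewrite /mx_abs_sum !mulr_suml; apply: (le_trans (ler_norm_sum _ _ _)).
apply: ler_sum => i _; rewrite mulr_suml.
apply: (le_trans (ler_norm_sum _ _ _)); apply: ler_sum => j _.
rewrite !normrM [`|x i 0| * _]mulrC -mulrA.
apply: ler_wpM2l => //; apply: ler_pM => //; exact: normr_coef_le_vnorm.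
Qed.

Lemma qformB P x w :
  qform P (x - w) =
  qform P x - (x^T *m P *m w) 0 0 - (w^T *m P *m x) 0 0 + qform P w.
Proof.
rewrite /qform [(x - w)^T]raddfB /= mulmxBl mulmxBr !mulmxBl !mxE.
ring.
Qed.

Lemma qformZ P (a : R) y : qform P (a *: y) = a ^+ 2 * qform P y.
Proof.
by rewrite /qform [(a *: y)^T]linearZ /= -!scalemxAl -scalemxAr scalerA mxE expr2.
Qed.

Lemma qform_subr_le P x w :
  qform P (x - w) <=
  qform P x + mx_abs_sum P * vnorm w * (2 * vnorm x + vnorm w).
Proof.
have := bilinear_le x P w; have := bilinear_le w P x; have := bilinear_le w P w.
rewrite qformB /qform !ler_norml.
move=> /andP[_ ww] /andP[wx _] /andP[xw _].
lra.
Qed.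

Lemma qform_subr_near P x (delta : R) : 0 < delta ->
  exists2 eps, 0 < eps &
    forall w, vnorm w <= eps -> qform P (x - w) <= qform P x + delta.
Proof.
move=> delta_gt0.
set K := mx_abs_sum P * (2 * vnorm x + 1).
have K_ge0 : 0 <= K by rewrite mulr_ge0 ?mx_abs_sum_ge0 // addr_ge0 ?mulr_ge0 ?vnorm_ge0.
have D_gt0 : 0 < K + delta + 1 by lra.
set eps := delta / (K + delta + 1).
have eps_gt0 : 0 < eps by rewrite divr_gt0.
have epsD : eps * (K + delta + 1) = delta by rewrite mulfVK ?gt_eqF.
exists eps => // w le_w_eps.
apply: le_trans (qform_subr_le P x w) _; rewrite lerD2l.
have le_eps1 : eps <= 1 by rewrite ler_pdivrMr // mul1r; lra.
have c_ge0 := mx_abs_sum_ge0 P; have w_ge0 := vnorm_ge0 w.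
have : mx_abs_sum P * vnorm w * (2 * vnorm x + vnorm w) <= eps * K.
  rewrite /K mulrA [eps * _]mulrC.
  have x_ge0 := vnorm_ge0 x.
  by apply: ler_pM; rewrite ?mulr_ge0 ?ler_wpM2l //; lra.
nra.
Qed.

Lemma in_scaledG_qform_le P (V lam : R) x :
  in_scaledG lam P V x -> qform P x <= lam ^+ 2 * V.
Proof. by case=> y [Gy ->]; rewrite qformZ ler_wpM2l ?sqr_ge0. Qed.

End QuadraticForm.

Theorem proposition6 (R : realType) (n2 m N : nat)
  (A2 : 'M[R]_n2) (B2 : 'M[R]_(n2, m)) (P : 'M[R]_n2) (V2 lam2 : R)
  (x2k : 'cV[R]_n2) (xf_k : nat -> 'cV[R]_n2) (u_k : nat -> 'cV[R]_m) :
  (2 <= N)%N ->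
  spd P -> 0 < V2 ->
  0 <= lam2 -> lam2 < 1 ->
  in_scaledG lam2 P V2 (pred_state A2 B2 x2k u_k N - xf_k N) ->
  exists eps : R, 0 < eps /\
    forall (xf_k1 : nat -> 'cV[R]_n2) (u_k1 : nat -> 'cV[R]_m),
      let x2k1 := A2 *m x2k + B2 *m u_k 0%N in
      vnorm (xf_k1 (N.-1) - xf_k N) <= eps ->
      (forall i : nat, (1 <= i <= N.-1)%N -> u_k1 i.-1 = u_k i) ->
      inG P V2 (pred_state A2 B2 x2k1 u_k1 N.-1 - xf_k1 N.-1).
Proof.
move=> le2N _ V2_gt0 lam2_ge0 lam2_lt1.
set e := pred_state A2 B2 x2k u_k N - xf_k N => /in_scaledG_qform_le e_in.
have margin_gt0 : 0 < (1 - lam2 ^+ 2) * V2 by rewrite mulr_gt0 //; nra.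
have [eps eps_gt0 near_e] := qform_subr_near P e margin_gt0.
exists eps; split=> // xf_k1 u_k1 x2k1 small_w shifted_u.
have N_gt0 : (0 < N)%N by apply: leq_trans le2N.
rewrite /x2k1 pred_state_shift => [|j lt_jN]; last first.
  by have := shifted_u j.+1; rewrite /= lt_jN => ->.
have -> : pred_state A2 B2 x2k u_k N.-1.+1 - xf_k1 N.-1 = e - (xf_k1 N.-1 - xf_k N).
  by rewrite prednK // /e opprB addrA subrK.
apply: le_trans (near_e _ small_w) _.
by rewrite /inG mulrBl mul1r -lerBrDr opprB addrC subrK.
Qed.
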